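(* Let $S\subseteq\{0,1\}^n$ be the vertex set of an acute $0/1$-simplex in $[0,1]^n$ with $k$ vertices. If $\hat S$ is the vertex set of an acute $0/1$-simplex in $[0,1]^n$ having $\mathrm{conv}(S)$ as a facet (face), then each vertex of $\hat S$ belongs to $S$ or to $\mathcal{A}^n(S)$.
   Context: A set of $j+1$ affinely independent points $a_0,\dots,a_j\in\{0,1\}^n$ is the vertex set of an acute $0/1$-$j$-simplex if all dihedral angles of their convex hull are acute; equivalently, with $P=[a_1-a_0,\dots,a_j-a_0]$ and $G=P^\top P$, every off-diagonal entry of $G^{-1}$ is negative and every row sum of $G^{-1}$ is positive. For the vertex set $S$ of an acute $0/1$-simplex, $\mathcal{A}^n(S)$ is the set of all $v\in\{0,1\}^n$ such that $S\cup\{v\}$ is the vertex set of an acute $0/1$-simplex with one more vertex. Here a facet of a simplex means the convex hull of any nonempty subset of its vertices (a face of any dimension). *)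

(* Points of {0,1}^n are finite functions 'I_n -> bool;
   linear algebra is done over rat (all Gram matrices are integral). *)
From mathcomp Require Import all_boot all_order all_algebra.
Set Implicit Arguments. Unset Strict Implicit. Unset Printing Implicit Defensive.
Import Order.TTheory GRing.Theory Num.Theory.
Local Open Scope ring_scope.

Notation pt n := {ffun 'I_n -> bool}.

Definition edge_mx (n j : nat) (a : 'I_j.+1 -> pt n) : 'M[rat]_(n, j) :=
  \matrix_(i < n, l < j) (((a (lift ord0 l) i : nat)%:R) - ((a ord0 i : nat)%:R)).

Definition gram_mx (n j : nat) (a : 'I_j.+1 -> pt n) : 'M[rat]_j :=
  (edge_mx a)^T *m edge_mx a.

(* a_0..a_j are affinely independent (G invertible), every off-diagonal
   entry of G^{-1} is negative and every row sum of G^{-1} is positive. *)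
Definition acute_tuple (n j : nat) (a : 'I_j.+1 -> pt n) : Prop :=
  [/\ gram_mx a \in unitmx,
      (forall l m : 'I_j, l != m -> invmx (gram_mx a) l m < 0) &
      (forall l : 'I_j, 0 < \sum_(m < j) invmx (gram_mx a) l m)].

Definition acute_simplex (n : nat) (S : {set pt n}) : Prop :=
  exists (j : nat) (a : 'I_j.+1 -> pt n),
    [/\ injective a, S = [set a i | i in 'I_j.+1] & acute_tuple a].

Definition in_An (n : nat) (S : {set pt n}) (v : pt n) : Prop :=
  v \notin S /\ acute_simplex (v |: S).

(* Every nonempty subset of the vertex set of an acute simplex spans an acute
   simplex; apply this to S u {v} inside Shat.  It suffices to delete one
   vertex at a time.  Deleting a vertex other than the base vertex a_0 deletes
   a row and a column of the Gram matrix G, which replaces G^-1 by a Schur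
   complement of G^-1; its off-diagonal entries stay negative and its row sums
   stay positive.  To delete a_0, first exchange it with another vertex: this
   conjugates G^-1 by an involution, and the new off-diagonal entries are
   off-diagonal entries or negated row sums of G^-1, while the new row sums
   are negated off-diagonal entries or row sums of G^-1. *)
From mathcomp Require Import all_boot all_order all_algebra.
From mathcomp Require Import ring lra perm.
Set Implicit Arguments. Unset Strict Implicit. Unset Printing Implicit Defensive.
Import Order.TTheory GRing.Theory Num.Theory.
Local Open Scope ring_scope.

Lemma invmx_left (R : comUnitRingType) j (Q G : 'M[R]_j) :
  Q *m G = 1%:M -> G \in unitmx /\ invmx G = Q.
Proof.
move=> QG; have [_ uG] := mulmx1_unit QG; split => //.
by rewrite -[LHS]mul1mx -QG mulmxK.
Qed.

Lemma mulmx1_entry (R : pzRingType) j (Q G : 'M[R]_j) l m :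
  Q *m G = 1%:M -> \sum_k Q l k * G k m = (l == m)%:R.
Proof. by move/matrixP/(_ l m); rewrite !mxE. Qed.

Lemma mulmx_conj_involutive (R : comPzRingType) j (T Q G : 'M[R]_j) :
  T *m T = 1%:M -> Q *m G = 1%:M -> (T *m Q *m T^T) *m (T^T *m G *m T) = 1%:M.
Proof.
move=> TT QG; have TtTt : T^T *m T^T = 1%:M by rewrite -trmx_mul TT trmx1.
rewrite !mulmxA -[_ *m T^T *m T^T]mulmxA TtTt mulmx1.
by rewrite -[_ *m Q *m G]mulmxA QG mulmx1 TT.
Qed.

Section SchurComplement.
Variables (R : fieldType) (j : nat).

Definition schur_del (Q : 'M[R]_j.+1) (p : 'I_j.+1) : 'M[R]_j :=
  \matrix_(l, m) (Q (lift p l) (lift p m) - Q (lift p l) p * Q p (lift p m) / Q p p).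

Lemma mulmx_schur_del (Q G : 'M[R]_j.+1) p : Q *m G = 1%:M -> Q p p != 0 ->
  schur_del Q p *m row' p (col' p G) = 1%:M.
Proof.
move=> QG Qp; apply/matrixP => l r; rewrite !mxE.
have Hl := mulmx1_entry (lift p l) (lift p r) QG.
have Hp := mulmx1_entry p (lift p r) QG.
rewrite (bigD1_ord p) //= (inj_eq (@lift_inj _ p)) in Hl.
rewrite (bigD1_ord p) //= eq_liftF /= in Hp.
set s := \sum_(k < j) Q p (lift p k) * G (lift p k) (lift p r) in Hp.
transitivity (\sum_(k < j) Q (lift p l) (lift p k) * G (lift p k) (lift p r)
              - Q (lift p l) p / Q p p * s).
  by rewrite mulr_sumr -sumrB; apply: eq_bigr => k _; rewrite !mxE; ring.
rewrite -[X in X - _](addKr (Q (lift p l) p * G p (lift p r))) Hl.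
rewrite -[s](addKr (Q p p * G p (lift p r))) Hp.
by field.
Qed.

End SchurComplement.

Section AcuteInverse.
Variable R : realFieldType.

Definition acute_inverse j (Q : 'M[R]_j) : Prop :=
  (forall l m, l != m -> Q l m < 0) /\ (forall l, 0 < \sum_m Q l m).

Lemma acute_inverse_diag_gt0 j (Q : 'M[R]_j) p : acute_inverse Q -> 0 < Q p p.
Proof.
case=> neg pos; have := pos p; rewrite (bigD1 p) //=.
have : \sum_(m | m != p) Q p m <= 0.
  by apply: sumr_le0 => m mp; apply/ltW/neg; rewrite eq_sym.
lra.
Qed.

Lemma acute_inverse_schur_del j (Q : 'M[R]_j.+1) p :
  acute_inverse Q -> acute_inverse (schur_del Q p).
Proof.
move=> acQ; have [neg pos] := acQ; have Qpp := acute_inverse_diag_gt0 p acQ.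
have Qlp l : Q (lift p l) p < 0 by apply: neg; rewrite lift_eqF.
have Qpm m : Q p (lift p m) < 0 by apply: neg; rewrite eq_liftF.
split=> [l m lm | l]; rewrite ?mxE.
  have : Q (lift p l) (lift p m) < 0 by apply: neg; rewrite (inj_eq (@lift_inj _ p)).
  have : 0 < Q (lift p l) p * Q p (lift p m) / Q p p.
    by rewrite divr_gt0 // -mulrNN mulr_gt0 // oppr_gt0.
  lra.
have Hl := pos (lift p l); have Hp := pos p.
rewrite (bigD1_ord p) //= in Hl; rewrite (bigD1_ord p) //= in Hp.
set sl := \sum_(m < j) Q (lift p l) (lift p m) in Hl.
set sp := \sum_(m < j) Q p (lift p m) in Hp.
have -> : \sum_m schur_del Q p l m = sl - Q (lift p l) p / Q p p * sp.
  rewrite mulr_sumr -sumrB; apply: eq_bigr => m _; rewrite mxE.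
  by field; rewrite gt_eqF.
(* a positive combination of the row sums of rows [lift p l] and [p] of Q *)
have -> : sl - Q (lift p l) p / Q p p * sp =
          (Q (lift p l) p + sl) + (- Q (lift p l) p) / Q p p * (Q p p + sp).
  by field; rewrite gt_eqF.
by rewrite addr_gt0 // mulr_gt0 // divr_gt0 // oppr_gt0.
Qed.

(* The change of edge basis [a_1 - a_0, ..., a_j - a_0] when a_0 and a_(q+1)
   are exchanged: column m /= q becomes e_m - e_q and column q becomes -e_q. *)
Definition rebase_mx j (q : 'I_j) : 'M[R]_j :=
  \matrix_(k, m) (if k == q then -1 else (k == m)%:R).

Lemma rebase_mx_mulmx j (q : 'I_j) (X : 'M[R]_j) k p :
  (rebase_mx q *m X) k p = if k == q then - \sum_i X i p else X k p.
Proof.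
rewrite mxE; case: ifP => kq.
  by rewrite -sumrN; apply: eq_bigr => i _; rewrite mxE kq mulN1r.
rewrite (bigD1 k) //= !mxE kq eqxx mul1r big1 ?addr0 // => i ik.
by rewrite mxE kq eq_sym (negbTE ik) mul0r.
Qed.

Lemma mulmx_rebase_tr j (q : 'I_j) (X : 'M[R]_j) l m :
  (X *m (rebase_mx q)^T) l m = if m == q then - \sum_p X l p else X l m.
Proof.
rewrite -[X *m _]trmxK trmx_mul trmxK mxE rebase_mx_mulmx.
by case: ifP => _; [congr (- _); apply: eq_bigr => i _|]; rewrite mxE.
Qed.

Lemma rebase_mxK j (q : 'I_j) : rebase_mx q *m rebase_mx q = 1%:M.
Proof.
apply/matrixP => k m; rewrite rebase_mx_mulmx [RHS]mxE.
case: ifP => [/eqP -> | kq]; last by rewrite mxE kq.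
rewrite (bigD1 q) //= mxE eqxx (eq_bigr (fun i => (i == m)%:R)); last first.
  by move=> i /negbTE iq; rewrite mxE iq.
have [-> | mq] := eqVneq m q.
  by rewrite big1 ?addr0 ?opprK // => i /negbTE ->.
rewrite (bigD1 m) //=.
rewrite big1; last by move=> i /andP [_ /negbTE ->].
by rewrite eqxx addr0 /= addNr oppr0.
Qed.

Lemma mulmx_rebase m j (q : 'I_j) (X : 'M[R]_(m, j)) i k :
  (X *m rebase_mx q) i k = (k != q)%:R * X i k - X i q.
Proof.
rewrite mxE (bigD1 q) //= mxE eqxx mulrN1 addrC; congr (_ - _).
case: (eqVneq k q) => [-> | kq].
  by rewrite mul0r big1 // => l /negbTE lq; rewrite mxE lq mulr0.
rewrite mul1r (bigD1 k) //= big1 ?addr0 => [|l /andP [lq lk]].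
  by rewrite mxE (negbTE kq) eqxx mulr1.
by rewrite mxE (negbTE lq) (negbTE lk) mulr0.
Qed.

Section Rebase.
Variables (j : nat) (Q : 'M[R]_j) (q : 'I_j).
Hypothesis Qsym : Q^T = Q.
Let r l := \sum_m Q l m.

Lemma rebase_conjE l m :
  (rebase_mx q *m Q *m (rebase_mx q)^T) l m =
  if l == q then (if m == q then \sum_i r i else - r m)
  else (if m == q then - r l else Q l m).
Proof.
have colE p : \sum_i Q i p = r p.
  by apply: eq_bigr => i _; rewrite -[in LHS]Qsym mxE.
rewrite mulmx_rebase_tr; case: (eqVneq l q) => lq; case: ifP => _;
  rewrite ?rebase_mx_mulmx ?lq ?eqxx ?colE //.
- rewrite -sumrN; apply: eq_bigr => p _.
  by rewrite rebase_mx_mulmx eqxx colE opprK.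
- by congr (- _); apply: eq_bigr => p _; rewrite rebase_mx_mulmx (negbTE lq).
- by rewrite (negbTE lq).
Qed.

Lemma acute_inverse_rebase :
  acute_inverse Q -> acute_inverse (rebase_mx q *m Q *m (rebase_mx q)^T).
Proof.
case=> neg pos; split=> [l m lm | l]; rewrite ?rebase_conjE.
  case: (eqVneq l q) => [lq | _]; case: (eqVneq m q) => [mq | _];
    rewrite ?oppr_lt0 ?pos ?neg //.
  by move: lm; rewrite lq mq eqxx.
rewrite (bigD1 q) //= rebase_conjE eqxx.
case: (eqVneq l q) => [-> | lq].
  rewrite [X in _ + X](eq_bigr (fun m => - r m)); last first.
    by move=> m /negbTE mq; rewrite rebase_conjE eqxx mq.
  by rewrite sumrN (bigD1 q) //= addrK pos.
rewrite [X in _ + X](eq_bigr (fun m => Q l m)); last first.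
  by move=> m /negbTE mq; rewrite rebase_conjE (negbTE lq) mq.
have := pos l; have := neg l q lq; rewrite /r (bigD1 q) //=; lra.
Qed.

End Rebase.

End AcuteInverse.

Arguments rebase_mx {R j}.

Section Faces.
Variable n : nat.

Definition drop_vertex j (a : 'I_j.+2 -> pt n) (p : 'I_j.+1) : 'I_j.+1 -> pt n :=
  fun k => a (lift (lift ord0 p) k).

Definition swap_base j (a : 'I_j.+1 -> pt n) (q : 'I_j) : 'I_j.+1 -> pt n :=
  fun i => a (tperm ord0 (lift ord0 q) i).

Lemma gram_drop_vertex j (a : 'I_j.+2 -> pt n) p :
  gram_mx (drop_vertex a p) = row' p (col' p (gram_mx a)).
Proof.
have lift0 : lift (lift ord0 p) ord0 = ord0 by apply: val_inj.
have liftS l : lift (lift ord0 p) (lift ord0 l) = lift ord0 (lift p l).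
  by apply: val_inj; rewrite /= /bump /= !add1n ltnS addnS.
apply/matrixP => l m; rewrite !mxE; apply: eq_bigr => i _.
by rewrite !mxE /drop_vertex lift0 !liftS.
Qed.

Lemma acute_drop_vertex j (a : 'I_j.+2 -> pt n) p :
  acute_tuple a -> acute_tuple (drop_vertex a p).
Proof.
case=> uG neg pos; have acQ : acute_inverse (invmx (gram_mx a)) by [].
have Qp := acute_inverse_diag_gt0 p acQ.
rewrite /acute_tuple gram_drop_vertex.
have [uG' ->] := invmx_left (mulmx_schur_del (mulVmx uG) (lt0r_neq0 Qp)).
by have [neg' pos'] := acute_inverse_schur_del p acQ.
Qed.

Lemma edge_swap_base j (a : 'I_j.+1 -> pt n) q :
  edge_mx (swap_base a q) = edge_mx a *m rebase_mx q.
Proof.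
apply/matrixP => i m; rewrite mulmx_rebase !mxE /swap_base tpermL.
case: (eqVneq m q) => [-> | mq]; first by rewrite tpermR mul0r add0r opprB.
rewrite tpermD ?neq_lift ?(inj_eq (@lift_inj _ _)) 1?eq_sym //.
by rewrite mul1r opprB addrA subrK.
Qed.

Lemma acute_swap_base j (a : 'I_j.+1 -> pt n) q :
  acute_tuple a -> acute_tuple (swap_base a q).
Proof.
case=> uG neg pos; set G := gram_mx a in uG neg pos *.
set T : 'M[rat]_j := rebase_mx q.
have Gsym : G^T = G by rewrite /G /gram_mx trmx_mul trmxK.
have Qsym : (invmx G)^T = invmx G by rewrite trmx_inv Gsym.
have gramE : gram_mx (swap_base a q) = T^T *m G *m T.
  by rewrite /G /gram_mx edge_swap_base trmx_mul !mulmxA.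
have QG : (T *m invmx G *m T^T) *m gram_mx (swap_base a q) = 1%:M.
  by rewrite gramE mulmx_conj_involutive ?rebase_mxK ?mulVmx.
rewrite /acute_tuple; have [uG' ->] := invmx_left QG.
by have [neg' pos'] := acute_inverse_rebase q Qsym (conj neg pos).
Qed.

Lemma drop_vertex_image j (a : 'I_j.+2 -> pt n) p : injective a ->
  [set drop_vertex a p k | k in 'I_j.+1] = [set a i | i in 'I_j.+2] :\ a (lift ord0 p).
Proof.
move=> inj_a; apply/setP => x; rewrite !inE.
apply/imsetP/andP => [[k _ ->] | [xa /imsetP [i _ xi]]].
  by rewrite (inj_eq inj_a) lift_eqF; split => //; apply: imset_f.
move: xa; rewrite xi (inj_eq inj_a).
by case: (unliftP (lift ord0 p) i) => [k -> _ | ->]; [exists k | rewrite eqxx].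
Qed.

Lemma swap_base_image j (a : 'I_j.+1 -> pt n) q :
  [set swap_base a q i | i in 'I_j.+1] = [set a i | i in 'I_j.+1].
Proof.
apply/setP => x; apply/imsetP/imsetP => [[i _ ->] | [i _ ->]].
  by exists (tperm ord0 (lift ord0 q) i).
by exists (tperm ord0 (lift ord0 q) i); rewrite // /swap_base tpermK.
Qed.

Lemma acute_simplexD1 (S : {set pt n}) x :
  acute_simplex S -> x \in S -> S :\ x != set0 -> acute_simplex (S :\ x).
Proof.
case=> [[|j] [a [inj_a defS ac]]] xS nzS.
  case/set0Pn: nzS => y /setD1P [yx]; rewrite defS in xS *.
  case/imsetP: xS yx => i _ -> yx /imsetP [i' _ yi'].
  by rewrite yi' (ord1 i) (ord1 i') eqxx in yx.
have [b [inj_b defSb ac_b] [p xb]] : exists2 b : 'I_j.+2 -> pt n,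
    [/\ injective b, S = [set b i | i in 'I_j.+2] & acute_tuple b] &
    exists p, x = b (lift ord0 p).
  move: xS; rewrite defS => /imsetP [i _ ->].
  case: (unliftP ord0 i) => [p -> | ->]; first by exists a => //; exists p.
  exists (swap_base a ord0); last by exists ord0; rewrite /swap_base tpermR.
  split; [by move=> i1 i2 /inj_a/perm_inj | exact/esym/swap_base_image |].
  exact: acute_swap_base.
exists j, (drop_vertex b p); split.
- by move=> k1 k2 /inj_b/lift_inj.
- by rewrite defSb xb drop_vertex_image.
- exact: acute_drop_vertex.
Qed.

Lemma acute_simplex_subset (S F : {set pt n}) :
  acute_simplex S -> F \subset S -> F != set0 -> acute_simplex F.
Proof.
have [m] := ubnP #|S|; elim: m S => // m IH S ltSm acS FS nzF.
have [SF | /subsetPn [x xS xF]] := boolP (S \subset F).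
  by have -> : F = S by apply/eqP; rewrite eqEsubset FS SF.
have FSx : F \subset S :\ x by rewrite subsetD1 FS xF.
apply: (IH (S :\ x)) => //.
- by move: ltSm; rewrite (cardsD1 x S) xS.
- apply: acute_simplexD1 => //; apply: contraNneq nzF => Sx0.
  by rewrite -subset0 -Sx0.
Qed.

End Faces.

Theorem theorem5p12 (n k : nat) (S Shat : {set {ffun 'I_n -> bool}}) :
  acute_simplex S -> #|S| = k ->
  acute_simplex Shat -> S \subset Shat ->
  forall v, v \in Shat -> v \in S \/ in_An S v.
Proof.
move=> _ _ acShat SShat v vShat.
have [vS | vS] := boolP (v \in S); [by left | right; split => //].
apply: (acute_simplex_subset acShat); first by rewrite subUset sub1set vShat.
by apply/set0Pn; exists v; rewrite setU11.
Qed.
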